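(* For every $n\ge 0$, let $K_n$ be any virtual knot diagram whose arrow diagram is ${\mathcal A}_n$. Then in the quandle of $K_n$ all generators are equal, so the quandle is generated by a single element, and the fundamental group of $K_n$ (defined via the Wirtinger-type presentation) is infinite cyclic, i.e. isomorphic to that of the unknot.
   Context: A virtual knot diagram is a generic immersion of an oriented circle in the plane in which each double point is a real crossing (with over/under information) or a virtual crossing. Its arrow diagram is the counterclockwise-oriented parametrizing circle with one arrow per real crossing joining its two preimages, pointing from the overcrossing preimage to the undercrossing preimage; an endpoint has sign $+$ if, viewing its strand in the direction of orientation, the other strand passes from right to left, and $-$ otherwise. The arrow diagram ${\mathcal A}_n$ ($n\ge0$) has arrows $x,y_1,\dots,y_n$ with endpoints in counterclockwise order $X^+,Y_1^+,\dots,Y_n^+,X^-,Y_n^-,\dots,Y_1^-$; $x$ points from $X^+$ to $X^-$; $y_j$ points from $Y_j^-$ to $Y_j^+$ if $n-j$ is even and from $Y_j^+$ to $Y_j^-$ if $n-j$ is odd. Quandle of a diagram: one generator per bridge arc (arc running between undercrossings at real crossings; labels pass unchanged through virtual crossings), and at each real crossing with overcrossing label $a$, incoming undercrossing label $b$, the outgoing undercrossing label is $c=b\triangleright a$ or $c=b\triangleleft a$ depending on the crossing sign, in the free quandle (a quandle satisfies $a\triangleright a=a\triangleleft a=a$, $(a\triangleleft b)\triangleright b=a=(a\triangleright b)\triangleleft b$, unique solvability, and self-distributivity). The fundamental group is the group with one generator per bridge arc and, at each real crossing, the relation $c=a^{\epsilon}ba^{-\epsilon}$ with $\epsilon=\pm1$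 the crossing sign. *)

From mathcomp Require Import all_boot all_order all_algebra.
Set Implicit Arguments. Unset Strict Implicit. Unset Printing Implicit Defensive.

(* An arrow diagram is the list of arrow endpoints met when running     *)
(* once around the counterclockwise-oriented parametrizing circle       *)
(* (i.e. along the knot orientation), starting at some base point.      *)
(* An endpoint is a triple (arrow, is_head, sgn):                        *)
(*   arrow   : nat  -- the name of the arrow (= real crossing);         *)
(*   is_head : bool -- true iff it is the head of the arrow, i.e. the   *)
(*                     undercrossing preimage (false = tail = over);     *)
(*   sgn     : bool -- true iff the endpoint sign is +.                  *)
Definition endpoint := (nat * bool * bool)%type.
Definition ep_arrow (e : endpoint) : nat := e.1.1.
Definition ep_head (e : endpoint) : bool := e.1.2.
Definition ep_sign (e : endpoint) : bool := e.2.

Definition e0 : endpoint := (0%N, false, false).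

Definition heads (D : seq endpoint) : seq nat :=
  [seq p <- iota 0 (size D) | ep_head (nth e0 D p)].

(* Bridge arcs are named by the head position at which they start (the
   outgoing undercrossing strand); an arc runs from one head to the next.
   [arc_of D k] is the bridge arc containing position k. *)
Definition arc_of (D : seq endpoint) (k : nat) : nat :=
  match [seq p <- heads D | p <= k] with
  | [::] => last 0 (heads D)
  | s => last 0 s
  end.

Definition tail_pos (D : seq endpoint) (i : nat) : nat :=
  find (fun e : endpoint => (ep_arrow e == i) && ~~ ep_head e) D.

(* sign of the real crossing of arrow i: +1 iff viewing along the over
   strand the under strand passes from right to left, i.e. iff the tail
   endpoint has sign + *)
Definition crossing_sign (D : seq endpoint) (i : nat) : bool :=
  ep_sign (nth e0 D (tail_pos D i)).

(* One crossing relation per real crossing (one per head position p):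
   (over label a, incoming under label b, outgoing under label c, sign). *)
Definition crossing_rel (D : seq endpoint) (p : nat) : nat * nat * nat * bool :=
  let i := ep_arrow (nth e0 D p) in
  (arc_of D (tail_pos D i), arc_of D ((p + size D).-1 %% size D), p,
   crossing_sign D i).

Definition crossing_rels (D : seq endpoint) := [seq crossing_rel D p | p <- heads D].

(* The knot quandle: free quandle on the bridge arcs modulo relations  *)
Inductive qterm : Type :=
| qvar of nat
| qR of qterm & qterm
| qL of qterm & qterm.

Fixpoint qterm_over (P : pred nat) (t : qterm) : bool :=
  match t with
  | qvar x => P x
  | qR a b => qterm_over P a && qterm_over P b
  | qL a b => qterm_over P a && qterm_over P b
  end.

Inductive qeq (rels : seq (nat * nat * nat * bool)) : qterm -> qterm -> Prop :=
| qeq_refl t : qeq rels t t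
| qeq_sym s t : qeq rels s t -> qeq rels t s
| qeq_trans s t u : qeq rels s t -> qeq rels t u -> qeq rels s u
| qeq_R a a' b b' : qeq rels a a' -> qeq rels b b' -> qeq rels (qR a b) (qR a' b')
| qeq_L a a' b b' : qeq rels a a' -> qeq rels b b' -> qeq rels (qL a b) (qL a' b')
| qeq_idR a : qeq rels (qR a a) a
| qeq_idL a : qeq rels (qL a a) a
| qeq_LR a b : qeq rels (qR (qL a b) b) a
| qeq_RL a b : qeq rels (qL (qR a b) b) a
| qeq_dist a b c : qeq rels (qR (qR a b) c) (qR (qR a c) (qR b c))
| qeq_rel a b c eps : (a, b, c, eps) \in rels ->
    qeq rels (qvar c) (if eps then qR (qvar b) (qvar a) else qL (qvar b) (qvar a)).

Definition knot_qeq (D : seq endpoint) := qeq (crossing_rels D).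

(* The fundamental group: free group on the bridge arcs modulo the      *)
(* relations c = a^eps b a^-eps.  Elements are words (letter, exponent  *)
(* sign) modulo the congruence generated by free reduction and the      *)
(* relators c^-1 a^eps b a^-eps.                                        *)
Definition letter := (nat * bool)%type.   (* (generator, true = +1) *)

Definition relator (r : nat * nat * nat * bool) : seq letter :=
  let: (a, b, c, eps) := r in [:: (c, false); (a, eps); (b, true); (a, ~~ eps)].

Inductive geq (rels : seq (nat * nat * nat * bool)) : seq letter -> seq letter -> Prop :=
| geq_refl w : geq rels w w
| geq_sym w w' : geq rels w w' -> geq rels w' w
| geq_trans w1 w2 w3 : geq rels w1 w2 -> geq rels w2 w3 -> geq rels w1 w3
| geq_free u v x b : geq rels (u ++ [:: (x, b); (x, ~~ b)] ++ v) (u ++ v)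
| geq_relator u v r : r \in rels -> geq rels (u ++ relator r ++ v) (u ++ v).

Definition knot_geq (D : seq endpoint) := geq (crossing_rels D).

(* The group <heads D | relations> is infinite cyclic: there is a group
   isomorphism from it onto (int, +), i.e. a map on words over the
   generators that is additive, surjective, and whose fibres are exactly
   the classes of the presenting congruence. *)
Definition group_infinite_cyclic (D : seq endpoint) : Prop :=
  exists phi : seq letter -> int,
    [/\ (forall u v, all (fun l : letter => l.1 \in heads D) u ->
                     all (fun l : letter => l.1 \in heads D) v ->
                     phi (u ++ v) = (phi u + phi v)%R),
        (forall u v, all (fun l : letter => l.1 \in heads D) u ->
                     all (fun l : letter => l.1 \in heads D) v ->
                     (knot_geq D u v <-> phi u = phi v)) &
        (forall z : int, exists2 u, all (fun l : letter => l.1 \in heads D) u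
                                    & phi u = z)].

(* The arrow diagram A_n: arrows x (named 0) and y_1..y_n (named j),   *)
(* endpoints X+, Y1+, ..., Yn+, X-, Yn-, ..., Y1-;  x : X+ -> X-;      *)
(* y_j : Yj- -> Yj+ if n-j even, Yj+ -> Yj- if n-j odd.                *)
Definition A_diag (n : nat) : seq endpoint :=
  [:: (0%N, false, true)] ++
  [seq (j, ~~ odd (n - j), true) | j <- iota 1 n] ++
  [:: (0%N, true, false)] ++
  [seq (j, odd (n - j), false) | j <- rev (iota 1 n)].

From Pilot Require Import Defs.
From mathcomp Require Import all_boot all_order all_algebra zify.
Set Implicit Arguments. Unset Strict Implicit.
Import GRing.Theory.
Local Notation geq := Defs.geq.

(* Number the endpoints of A_n from 0 to 2n+1 starting at X+; then x joins
   0 and n+1 and y_j joins j and 2n+2-j.  Walking inwards from the base point,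
   j = 1, ..., n, the over arc and one under arc of the crossing y_j are already
   known to equal the arc L through the base point, and the crossing relation
   forces the other under arc to equal L too.  The same propagation works in
   the quandle and in the group, since in both a crossing relation determines
   either under arc from the over arc and the other under arc.  In the group all generators thus
   coincide, so the exponent sum is an isomorphism onto Z. *)

Lemma find_nth_first (T : Type) (P : pred T) x0 (s : seq T) k :
  k < size s -> P (nth x0 s k) -> (forall i, i < k -> ~~ P (nth x0 s i)) ->
  find P s = k.
Proof.
elim: s k => [|x s IH] [|k] //= Hk Hp Hi.
- by rewrite Hp.
- have := Hi 0 isT; rewrite /= => /negbTE ->; congr S.
  by apply: IH => // i Hik; apply: (Hi i.+1).
Qed.

Section BridgeArcs.
Variable D : seq endpoint.

Definition head_at p := ep_head (nth e0 D p).

Lemma mem_heads p : (p \in heads D) = (p < size D) && head_at p.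
Proof. by rewrite /heads mem_filter mem_iota andbC. Qed.

Lemma heads_le k : k < size D ->
  [seq p <- heads D | p <= k] = [seq p <- iota 0 k.+1 | head_at p].
Proof.
move=> Hk; rewrite /heads -filter_predI.
have -> : size D = k.+1 + (size D - k.+1) by lia.
rewrite iotaD filter_cat.
have -> : [seq p <- iota (0 + k.+1) (size D - k.+1) |
    predI (fun p => p <= k) (fun p => ep_head (nth e0 D p)) p] = [::].
  rewrite (@eq_in_filter _ _ pred0) ?filter_pred0 // => x; rewrite mem_iota => Hx.
  by apply/negbTE/negP => /andP [Hxk _]; lia.
rewrite cats0; apply: eq_in_filter => x; rewrite mem_iota => Hx /=.
by have -> : x <= k by lia.
Qed.

Lemma arc_of_head k : k < size D -> head_at k -> arc_of D k = k.
Proof.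
move=> Hk Hh; rewrite /arc_of heads_le // -addn1 iotaD filter_cat /= Hh.
by case: [seq _ <- _ | _] => [|x s] //=; rewrite last_cat.
Qed.

Lemma arc_of_nonhead k : 0 < k < size D -> ~~ head_at k -> arc_of D k = arc_of D k.-1.
Proof.
move=> /andP [H0 Hk] Hh; rewrite /arc_of !heads_le //; last by lia.
have -> : k.-1.+1 = k by lia.
by rewrite -addn1 iotaD filter_cat /= (negbTE Hh) cats0.
Qed.

Lemma arc_of_last : 0 < size D -> arc_of D (size D).-1 = last 0 (heads D).
Proof.
move=> H; rewrite /arc_of heads_le; last by lia.
have -> : (size D).-1.+1 = size D by lia.
by rewrite -/(heads D); case: (heads D).
Qed.

Lemma arc_of0 : 0 < size D -> ~~ head_at 0 -> arc_of D 0 = last 0 (heads D).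
Proof. by move=> H Hh; rewrite /arc_of heads_le //= (negbTE Hh). Qed.

Lemma crossing_rel_mem c : c \in heads D -> 0 < c ->
  (arc_of D (tail_pos D (ep_arrow (nth e0 D c))), arc_of D c.-1, c,
   crossing_sign D (ep_arrow (nth e0 D c))) \in crossing_rels D.
Proof.
move=> Hc H0; have Hs : c < size D by move: Hc; rewrite mem_heads => /andP [].
have -> : c.-1 = (c + size D).-1 %% size D.
  have -> : (c + size D).-1 = c.-1 + size D by lia.
  by rewrite modnDr modn_small //; lia.
exact: (map_f (crossing_rel D) Hc).
Qed.

End BridgeArcs.

Definition rel_closed (rels : seq (nat * nat * nat * bool)) (S : nat -> Prop) :=
  forall a b c e, (a, b, c, e) \in rels -> S a -> (S b <-> S c).

Section ArrowDiagramA.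
Variable n : nat.
Local Notation A := (A_diag n).

Lemma size_A_diag : size A = n.*2.+2.
Proof. rewrite /A_diag /= size_cat /= !size_map size_rev size_iota; lia. Qed.

Lemma nth_A_diag0 : nth e0 A 0 = (0%N, false, true).
Proof. by []. Qed.

Lemma nth_A_diag_mid : nth e0 A n.+1 = (0%N, true, false).
Proof. by rewrite /A_diag /= nth_cat size_map size_iota ltnn subnn. Qed.

Lemma nth_A_diag_up j : 1 <= j <= n -> nth e0 A j = (j, ~~ odd (n - j), true).
Proof.
case: j => [|j] // H; rewrite /A_diag /= nth_cat size_map size_iota.
have -> : j < n by lia.
by rewrite (nth_map 0%N) ?size_iota ?nth_iota //; lia.
Qed.

Lemma nth_A_diag_down j : 1 <= j <= n -> nth e0 A (n.*2.+2 - j) = (j, odd (n - j), false).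
Proof.
move=> H; have -> : n.*2.+2 - j = (n.*2.+1 - j).+1 by lia.
rewrite /A_diag /= nth_cat size_map size_iota.
have -> : (n.*2.+1 - j < n) = false by apply/negbTE; lia.
have -> : n.*2.+1 - j - n = (n - j).+1 by lia.
rewrite /= (nth_map 0%N) ?size_rev ?size_iota; last by lia.
rewrite nth_rev ?size_iota; last by lia.
by rewrite nth_iota; [congr (_, _, _); lia | lia].
Qed.

Lemma ep_arrow_A_diag_other j i : 1 <= j <= n -> i < n.*2.+2 ->
  i != j -> i != n.*2.+2 - j -> ep_arrow (nth e0 A i) != j.
Proof.
move=> Hj Hi H1 H2.
case: (posnP i) => [->|Hi0]; first by rewrite nth_A_diag0 /ep_arrow /=; lia.
case: (leqP i n) => Hin; first by rewrite nth_A_diag_up /ep_arrow /=; lia.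
case: (eqVneq i n.+1) => [->|Hm]; first by rewrite nth_A_diag_mid /ep_arrow /=; lia.
have Hk : 1 <= n.*2.+2 - i <= n by lia.
have := nth_A_diag_down Hk; have -> : n.*2.+2 - (n.*2.+2 - i) = i by lia.
by move=> ->; rewrite /ep_arrow /=; lia.
Qed.

Lemma tail_pos_A_diag_down j : 1 <= j <= n -> ~~ odd (n - j) ->
  tail_pos A j = n.*2.+2 - j.
Proof.
move=> Hj Ho; apply: (@find_nth_first _ _ e0); first by rewrite size_A_diag; lia.
  by rewrite nth_A_diag_down // /ep_arrow /ep_head /= eqxx (negbTE Ho).
move=> i Hi /=; case: (eqVneq i j) => [->|Hij].
  by rewrite nth_A_diag_up // /ep_head /= Ho andbF.
by rewrite (negbTE (ep_arrow_A_diag_other Hj _ Hij _)) //; lia.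
Qed.

Lemma tail_pos_A_diag_up j : 1 <= j <= n -> odd (n - j) -> tail_pos A j = j.
Proof.
move=> Hj Ho; apply: (@find_nth_first _ _ e0); first by rewrite size_A_diag; lia.
  by rewrite nth_A_diag_up // /ep_arrow /ep_head /= eqxx Ho.
by move=> i Hi /=; rewrite (negbTE (ep_arrow_A_diag_other Hj _ _ _)) //; lia.
Qed.

Lemma head_at_A_diag_up j : 1 <= j <= n -> head_at A j = ~~ odd (n - j).
Proof. by move=> H; rewrite /head_at nth_A_diag_up. Qed.

Lemma head_at_A_diag_down j : 1 <= j <= n -> head_at A (n.*2.+2 - j) = odd (n - j).
Proof. by move=> H; rewrite /head_at nth_A_diag_down. Qed.

Lemma crossing_A_diag_up j : 1 <= j <= n -> ~~ odd (n - j) ->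
  [/\ arc_of A j = j,
      arc_of A (n.*2.+1 - j) = arc_of A (n.*2.+2 - j) &
      exists e, (arc_of A (n.*2.+2 - j), arc_of A j.-1, j, e) \in crossing_rels A].
Proof.
move=> Hj Ho; have Hh : head_at A j by rewrite head_at_A_diag_up.
split.
- by rewrite arc_of_head // size_A_diag; lia.
- have Hn : ~~ head_at A (n.*2.+2 - j) by rewrite head_at_A_diag_down.
  rewrite (@arc_of_nonhead A (n.*2.+2 - j)) ?size_A_diag //; [congr arc_of; lia | lia].
- have Hc : j \in heads A by rewrite mem_heads Hh size_A_diag andbT; lia.
  have := crossing_rel_mem Hc ltac:(lia).
  by rewrite nth_A_diag_up // tail_pos_A_diag_down //= => Hr; eexists; exact: Hr.
Qed.

Lemma crossing_A_diag_down j : 1 <= j <= n -> odd (n - j) ->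
  [/\ arc_of A j = arc_of A j.-1,
      arc_of A (n.*2.+2 - j) = n.*2.+2 - j &
      exists e, (arc_of A j.-1, arc_of A (n.*2.+1 - j), n.*2.+2 - j, e)
                  \in crossing_rels A].
Proof.
move=> Hj Ho; have Hh : head_at A (n.*2.+2 - j) by rewrite head_at_A_diag_down.
have Hup : arc_of A j = arc_of A j.-1.
  by rewrite arc_of_nonhead ?head_at_A_diag_up ?Ho ?size_A_diag //; lia.
split => //; first by rewrite arc_of_head // size_A_diag; lia.
have Hc : n.*2.+2 - j \in heads A by rewrite mem_heads Hh size_A_diag andbT; lia.
have := crossing_rel_mem Hc ltac:(lia).
have -> : (n.*2.+2 - j).-1 = n.*2.+1 - j by lia.
by rewrite nth_A_diag_down // tail_pos_A_diag_up //= Hup => Hr; eexists; exact: Hr.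
Qed.

Lemma last_heads_A_diag : last 0 (heads A) \in heads A.
Proof.
have : n.+1 \in heads A.
  by rewrite mem_heads /head_at nth_A_diag_mid size_A_diag andbT; lia.
by case: (heads A) => [|x s] //= _; exact: mem_last.
Qed.

Lemma rel_closed_arcs_A_diag (S : nat -> Prop) :
  rel_closed (crossing_rels A) S -> S (last 0 (heads A)) ->
  forall m, m <= n -> S (arc_of A m) /\ S (arc_of A (n.*2.+1 - m)).
Proof.
move=> HS HL; have Hsz := size_A_diag.
elim=> [_|m IH Hm].
  rewrite subn0 arc_of0 ?Hsz //; split => //.
  by have := @arc_of_last A; rewrite Hsz /= => ->.
have [IHlo IHhi] := IH ltac:(lia).
have Hj : 1 <= m.+1 <= n by lia.
have Ehi : n.*2.+2 - m.+1 = n.*2.+1 - m by lia.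
case: (boolP (odd (n - m.+1))) => Ho.
- have [-> Ehead [e He]] := crossing_A_diag_down Hj Ho.
  split => //; apply/(HS _ _ _ _ He IHlo).
  by rewrite -Ehead Ehi.
- have [-> Etail [e He]] := crossing_A_diag_up Hj Ho.
  rewrite Etail Ehi; split => //.
  by rewrite Ehi in He; apply/(HS _ _ _ _ He IHhi).
Qed.

Lemma rel_closed_heads_A_diag (S : nat -> Prop) :
  rel_closed (crossing_rels A) S -> S (last 0 (heads A)) ->
  forall p, p \in heads A -> S p.
Proof.
move=> HS HL p; rewrite mem_heads size_A_diag => /andP [Hp Hh].
rewrite -(@arc_of_head A p) ?size_A_diag //.
case: (leqP p n) => Hpn; first by case: (rel_closed_arcs_A_diag HS HL Hpn).
have Hq : n.*2.+1 - p <= n by lia.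
have [_] := rel_closed_arcs_A_diag HS HL Hq.
by have -> : n.*2.+1 - (n.*2.+1 - p) = p by lia.
Qed.

End ArrowDiagramA.

Section Quandle.
Variable rels : seq (nat * nat * nat * bool).

Lemma rel_closed_qeq x : rel_closed rels (fun p => qeq rels (qvar p) (qvar x)).
Proof.
move=> a b c [] Hr Ha; split => [Hb|Hc].
- exact: qeq_trans (qeq_rel Hr) (qeq_trans (qeq_R Hb Ha) (qeq_idR _ _)).
- apply: qeq_trans (qeq_sym (qeq_RL _ (qvar b) (qvar a))) _.
  apply: qeq_trans (qeq_L (qeq_sym (qeq_rel Hr)) (qeq_refl _ _)) _.
  exact: qeq_trans (qeq_L Hc Ha) (qeq_idL _ _).
- exact: qeq_trans (qeq_rel Hr) (qeq_trans (qeq_L Hb Ha) (qeq_idL _ _)).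
- apply: qeq_trans (qeq_sym (qeq_LR _ (qvar b) (qvar a))) _.
  apply: qeq_trans (qeq_R (qeq_sym (qeq_rel Hr)) (qeq_refl _ _)) _.
  exact: qeq_trans (qeq_R Hc Ha) (qeq_idR _ _).
Qed.

Lemma qeq_qterm_over (P : pred nat) x :
  (forall p, P p -> qeq rels (qvar p) (qvar x)) ->
  forall t, qterm_over P t -> qeq rels t (qvar x).
Proof.
move=> HP; elim=> [p|a IHa b IHb|a IHa b IHb] /=; first exact: HP.
- move=> /andP [Ha Hb]; exact: qeq_trans (qeq_R (IHa Ha) (IHb Hb)) (qeq_idR _ _).
- move=> /andP [Ha Hb]; exact: qeq_trans (qeq_L (IHa Ha) (IHb Hb)) (qeq_idL _ _).
Qed.

End Quandle.

Section Group.
Variable rels : seq (nat * nat * nat * bool).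

Lemma geq_cat u v w w' : geq rels w w' -> geq rels (u ++ w ++ v) (u ++ w' ++ v).
Proof.
elim=> {w w'} [w|w w' _ IH|w1 w2 w3 _ IH1 _ IH2|u0 v0 x b|u0 v0 r Hr].
- exact: geq_refl.
- exact: geq_sym.
- exact: geq_trans IH2.
- by have := geq_free rels (u ++ u0) (v0 ++ v) x b; rewrite -!catA.
- by have := geq_relator (u ++ u0) (v0 ++ v) Hr; rewrite -!catA.
Qed.

Lemma geq_free_inv u v x b : geq rels (u ++ [:: (x, ~~ b); (x, b)] ++ v) (u ++ v).
Proof. by have := geq_free rels u v x (~~ b); rewrite negbK. Qed.

Lemma geq_crossing_out a b c e : (a, b, c, e) \in rels ->
  geq rels [:: (c, true)] [:: (a, e); (b, true); (a, ~~ e)].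
Proof.
move=> Hr; apply: geq_trans (geq_sym (geq_relator [:: (c, true)] [::] Hr)) _.
exact: (geq_free rels [::] _ c true).
Qed.

Lemma geq_crossing_in a b c e : (a, b, c, e) \in rels ->
  geq rels [:: (b, true)] [:: (a, ~~ e); (c, true); (a, e)].
Proof.
move=> Hr; apply: geq_sym.
have := geq_relator [:: (a, ~~ e); (c, true)] [:: (a, e)] Hr; rewrite /= => Hins.
apply: geq_trans (geq_sym Hins) _.
have Hcc := geq_free rels [:: (a, ~~ e)] [:: (a, e); (b, true); (a, ~~ e); (a, e)] c true.
apply: geq_trans Hcc _.
apply: geq_trans (geq_free_inv [::] [:: (b, true); (a, ~~ e); (a, e)] a e) _.
exact: (geq_free_inv [:: (b, true)] [::] a e).
Qed.

Definition exp_sum (w : seq letter) : int :=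
  foldr (fun l z => ((if l.2 then 1 else -1) + z)%R) 0%R w.

Lemma exp_sum_cat u v : exp_sum (u ++ v) = (exp_sum u + exp_sum v)%R.
Proof. by elim: u => [|l u IH] /=; [rewrite add0r | rewrite IH addrA]. Qed.

Lemma exp_sum_geq w w' : geq rels w w' -> exp_sum w = exp_sum w'.
Proof.
elim=> {w w'} // [w1 w2 w3 _ -> _ -> //|u v x [] |u v [[[a b] c] []] _];
by rewrite !exp_sum_cat /=; lia.
Qed.

Definition gpow (x : nat) (z : int) : seq letter :=
  match z with Posz k => nseq k (x, true) | Negz k => nseq k.+1 (x, false) end.

Lemma exp_sum_gpow x z : exp_sum (gpow x z) = z.
Proof. by case: z => k /=; [|rewrite NegzE]; elim: k => [|k IH] //=; rewrite IH; lia. Qed.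

Lemma geq_cons_gpow x b z :
  geq rels ((x, b) :: gpow x z) (gpow x ((if b then 1 else -1) + z)%R).
Proof.
case: b; case: z => [[|k]|k].
- exact: geq_refl.
- by rewrite (_ : (1 + Posz k.+1 = Posz k.+2)%R) //; exact: geq_refl.
- case: k => [|k]; first exact: (geq_free rels [::] [::] x true).
  rewrite (_ : (1 + Negz k.+1 = Negz k)%R); last by rewrite !NegzE; lia.
  exact: (geq_free rels [::] _ x true).
- by rewrite (_ : (-1 + Posz 0 = Negz 0)%R); [exact: geq_refl | rewrite NegzE; lia].
- by rewrite (_ : (-1 + Posz k.+1 = Posz k)%R); [exact: (geq_free rels [::] _ x false) | lia].
- by rewrite (_ : (-1 + Negz k = Negz k.+1)%R); [exact: geq_refl | rewrite !NegzE; lia].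
Qed.

Lemma geq_letter_inv p x :
  geq rels [:: (p, true)] [:: (x, true)] -> geq rels [:: (p, false)] [:: (x, false)].
Proof.
move=> H; apply: geq_trans (geq_sym (geq_free rels [:: (p, false)] [::] x true)) _.
apply: geq_trans (geq_cat [:: (p, false)] [:: (x, false)] (geq_sym H)) _.
exact: (geq_free rels [::] [:: (x, false)] p false).
Qed.

Lemma geq_gpow (S : pred nat) x :
  (forall p, S p -> geq rels [:: (p, true)] [:: (x, true)]) ->
  forall w, all (fun l : letter => S l.1) w -> geq rels w (gpow x (exp_sum w)).
Proof.
move=> HS; elim=> [|[p b] w IH] /=; first by move=> _; exact: geq_refl.
move=> /andP [Hp Hw].
have Hpx : geq rels [:: (p, b)] [:: (x, b)].
  by case: b; [apply: HS | apply: geq_letter_inv; apply: HS].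
apply: geq_trans (geq_cat [::] w Hpx) _.
have := geq_cat [:: (x, b)] [::] (IH Hw); rewrite /= !cats0 => Hw'.
exact: geq_trans Hw' (geq_cons_gpow _ _ _).
Qed.

Lemma rel_closed_geq x :
  rel_closed rels (fun p => geq rels [:: (p, true)] [:: (x, true)]).
Proof.
have Hconj q r e : geq rels [:: (q, true)] [:: (x, true)] ->
    geq rels [:: (r, true)] [:: (x, true)] ->
    geq rels [:: (q, e); (r, true); (q, ~~ e)] [:: (x, true)].
  move=> Hq Hr; have Hqr p : (p == q) || (p == r) -> geq rels [:: (p, true)] [:: (x, true)].
    by case/orP => /eqP ->.
  have Hsum : exp_sum [:: (q, e); (r, true); (q, ~~ e)] = 1%R by case: e => /=; lia.
  have := geq_gpow Hqr (w := [:: (q, e); (r, true); (q, ~~ e)]).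
  by rewrite Hsum /= !eqxx !orbT; apply.
move=> a b c e Hr Ha; split => [Hb|Hc].
- exact: geq_trans (geq_crossing_out Hr) (Hconj _ _ _ Ha Hb).
- by have := Hconj _ _ (~~ e) Ha Hc; rewrite negbK; exact: geq_trans (geq_crossing_in Hr).
Qed.

End Group.

Lemma group_infinite_cyclic_of_single_generator D x : x \in heads D ->
  (forall p, p \in heads D -> knot_geq D [:: (p, true)] [:: (x, true)]) ->
  group_infinite_cyclic D.
Proof.
move=> Hx Hall; exists exp_sum; split.
- by move=> u v _ _; exact: exp_sum_cat.
- move=> u v Hu Hv; split; first exact: exp_sum_geq.
  move=> E; have := geq_gpow Hall Hv; rewrite -E => Hv'.
  exact: geq_trans (geq_gpow Hall Hu) (geq_sym Hv').
- move=> z; exists (gpow x z); last exact: exp_sum_gpow.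
  by case: z => k; rewrite /gpow all_nseq /= Hx ?orbT.
Qed.

Theorem theorem10 (n : nat) :
  [/\ (forall p q, p \in heads (A_diag n) -> q \in heads (A_diag n) ->
         knot_qeq (A_diag n) (qvar p) (qvar q)),
      (exists2 x, x \in heads (A_diag n) &
         forall t, qterm_over (fun p => p \in heads (A_diag n)) t ->
                   knot_qeq (A_diag n) t (qvar x)) &
      group_infinite_cyclic (A_diag n)].
Proof.
set L := last 0 (heads (A_diag n)).
have HL : L \in heads (A_diag n) := last_heads_A_diag n.
have Hq p : p \in heads (A_diag n) -> knot_qeq (A_diag n) (qvar p) (qvar L).
  exact: (@rel_closed_heads_A_diag n _ (@rel_closed_qeq _ L) (qeq_refl _ _) p).
have Hg p : p \in heads (A_diag n) -> knot_geq (A_diag n) [:: (p, true)] [:: (L, true)].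
  exact: (@rel_closed_heads_A_diag n _ (@rel_closed_geq _ L) (geq_refl _ _) p).
split.
- by move=> p q Hp Hq'; exact: qeq_trans (Hq p Hp) (qeq_sym (Hq q Hq')).
- by exists L => //; exact: qeq_qterm_over.
- exact: group_infinite_cyclic_of_single_generator HL Hg.
Qed.
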